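(* Let $X$ and $Y$ be topological spaces, $(Z,d)$ a metric space, $f:X\times Y\to Z$ a mapping, and $\mathcal B$ a countable collection of nonempty subsets of $Y$. Suppose that for every $V\in\mathcal B$ the set-valued mapping $F^V:X\ni x\mapsto f_x(V)\in 2^Z$ is lower quasicontinuous. Then there is a residual set $R\subset X$ such that for each $a\in R$: (1) if $f_a$ is continuous at $b\in Y$ and $b$ has a neighborhood base (in $Y$) contained in $\mathcal B$, then $f$ is continuous at $(a,b)$; (2) if $f_a$ is quasicontinuous at $b\in Y$ and some neighborhood $V'$ of $b$ in $Y$ has a pseudobase (as a subspace) contained in $\mathcal B$, then $f$ is quasicontinuous with respect to the variable $x$ at $(a,b)$; (3) if $f_a$ is cliquish at $b\in Y$ and some neighborhood $V'$ of $b$ in $Y$ has a pseudobase (as a subspace) contained in $\mathcal B$, then $f$ is cliquish with respect to the variable $x$ at $(a,b)$.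
   Context: $f_x(y)=f(x,y)$; $2^Z$ is the set of nonempty subsets of $Z$. $F:X\to 2^Z$ is lower quasicontinuous if for each $x_0\in X$, each neighborhood $U$ of $x_0$ and each open $W\subset Z$ with $F(x_0)\cap W\ne\emptyset$, there is an open $O$ with $\emptyset\ne O\subset U$ and $F(x)\cap W\ne\emptyset$ for all $x\in O$. A mapping $g:Y\to Z$ is quasicontinuous at $b$ if for each neighborhood $V$ of $b$ and neighborhood $W$ of $g(b)$ there is an open $O$ with $\emptyset\ne O\subset V$ and $g(O)\subset W$; it is cliquish at $b$ if for each $\varepsilon>0$ and neighborhood $V$ of $b$ there is an open $O$ with $\emptyset\ne O\subset V$ and $\mathrm{diam}(g(O))\le\varepsilon$. $f$ is quasicontinuous with respect to the variable $x$ at $(a,b)$ if for each neighborhood $V$ of $b$ and $\varepsilon>0$ there are a neighborhood $U$ of $a$ and an open $O\subset Y$ with $\emptyset\ne O\subset V$ such that $d(f(a,b),f(x,y))\le\varepsilon$ for all $x\in U$, $y\in O$; $f$ is cliquish with respect to the variable $x$ at $(a,b)$ if for each neighborhood $V$ of $b$ and $\varepsilon>0$ there are a neighborhood $U$ of $a$ and an open $O\subset Y$ with $\emptyset\ne O\subset V$ such that $d(f(a,y),f(x,y'))\le\varepsilon$ for all $x\in U$, $y,y'\in O$. A pseudobase ($\pi$-base) of a space is a collection of nonempty open sets such that every nonempty open set contains a member of it. Residual means containing a countable intersection of dense open sets. *)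

From Stdlib Require Import Reals.
Open Scope R_scope.

Definition is_topology {X : Type} (op : (X -> Prop) -> Prop) : Prop :=
  op (fun _ => True) /\
  (forall U V, op U -> op V -> op (fun x => U x /\ V x)) /\
  (forall (F : (X -> Prop) -> Prop), (forall U, F U -> op U) ->
     op (fun x => exists U, F U /\ U x)).

Definition is_metric {Z : Type} (d : Z -> Z -> R) : Prop :=
  (forall x y, 0 <= d x y) /\
  (forall x y, d x y = 0 <-> x = y) /\
  (forall x y, d x y = d y x) /\
  (forall x y z, d x z <= d x y + d y z).

Definition metric_open {Z : Type} (d : Z -> Z -> R) (W : Z -> Prop) : Prop :=
  forall z, W z -> exists e, 0 < e /\ forall z', d z z' < e -> W z'.

Definition subset {X : Type} (A B : X -> Prop) : Prop := forall x, A x -> B x.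
Definition nonempty {X : Type} (A : X -> Prop) : Prop := exists x, A x.

Definition nbhd {X : Type} (op : (X -> Prop) -> Prop) (x : X) (N : X -> Prop) : Prop :=
  exists U, op U /\ U x /\ subset U N.

Definition dense {X : Type} (op : (X -> Prop) -> Prop) (D : X -> Prop) : Prop :=
  forall U, op U -> nonempty U -> exists x, U x /\ D x.

Definition residual {X : Type} (op : (X -> Prop) -> Prop) (R0 : X -> Prop) : Prop :=
  exists D : nat -> X -> Prop,
    (forall n, op (D n) /\ dense op (D n)) /\
    (forall x, (forall n, D n x) -> R0 x).

Definition countable_coll {Y : Type} (B : (Y -> Prop) -> Prop) : Prop :=
  exists e : nat -> (Y -> Prop), forall V, B V -> exists n, e n = V.

Definition lower_quasicont {X Z : Type} (opX : (X -> Prop) -> Prop) (d : Z -> Z -> R)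
  (F : X -> Z -> Prop) : Prop :=
  forall x0 U W, nbhd opX x0 U -> metric_open d W -> (exists z, F x0 z /\ W z) ->
    exists O, opX O /\ nonempty O /\ subset O U /\
      forall x, O x -> exists z, F x z /\ W z.

Definition img_section {X Y Z : Type} (f : X -> Y -> Z) (V : Y -> Prop) : X -> Z -> Prop :=
  fun x z => exists y, V y /\ f x y = z.

Definition continuous_at {Y Z : Type} (opY : (Y -> Prop) -> Prop) (d : Z -> Z -> R)
  (g : Y -> Z) (b : Y) : Prop :=
  forall W, metric_open d W -> W (g b) -> exists V, nbhd opY b V /\ forall y, V y -> W (g y).

Definition quasicontinuous_at {Y Z : Type} (opY : (Y -> Prop) -> Prop) (d : Z -> Z -> R)
  (g : Y -> Z) (b : Y) : Prop :=
  forall V W, nbhd opY b V -> nbhd (metric_open d) (g b) W ->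
    exists O, opY O /\ nonempty O /\ subset O V /\ forall y, O y -> W (g y).

Definition cliquish_at {Y Z : Type} (opY : (Y -> Prop) -> Prop) (d : Z -> Z -> R)
  (g : Y -> Z) (b : Y) : Prop :=
  forall eps V, 0 < eps -> nbhd opY b V ->
    exists O, opY O /\ nonempty O /\ subset O V /\
      forall y y', O y -> O y' -> d (g y) (g y') <= eps.

(** Continuity of f : X x Y -> Z at (a,b) for the product topology
    (product neighborhoods U x V form a neighborhood base). *)
Definition joint_continuous_at {X Y Z : Type} (opX : (X -> Prop) -> Prop)
  (opY : (Y -> Prop) -> Prop) (d : Z -> Z -> R) (f : X -> Y -> Z) (a : X) (b : Y) : Prop :=
  forall W, metric_open d W -> W (f a b) ->
    exists U V, nbhd opX a U /\ nbhd opY b V /\ forall x y, U x -> V y -> W (f x y).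

Definition quasicont_wrt_x {X Y Z : Type} (opX : (X -> Prop) -> Prop)
  (opY : (Y -> Prop) -> Prop) (d : Z -> Z -> R) (f : X -> Y -> Z) (a : X) (b : Y) : Prop :=
  forall V eps, nbhd opY b V -> 0 < eps ->
    exists U O, nbhd opX a U /\ opY O /\ nonempty O /\ subset O V /\
      forall x y, U x -> O y -> d (f a b) (f x y) <= eps.

Definition cliquish_wrt_x {X Y Z : Type} (opX : (X -> Prop) -> Prop)
  (opY : (Y -> Prop) -> Prop) (d : Z -> Z -> R) (f : X -> Y -> Z) (a : X) (b : Y) : Prop :=
  forall V eps, nbhd opY b V -> 0 < eps ->
    exists U O, nbhd opX a U /\ opY O /\ nonempty O /\ subset O V /\
      forall x y y', U x -> O y -> O y' -> d (f a y) (f x y') <= eps.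

Definition nbhd_base {Y : Type} (opY : (Y -> Prop) -> Prop) (b : Y)
  (Bb : (Y -> Prop) -> Prop) : Prop :=
  (forall V, Bb V -> nbhd opY b V) /\
  (forall N, nbhd opY b N -> exists V, Bb V /\ subset V N).

Definition subspace_open {Y : Type} (opY : (Y -> Prop) -> Prop) (V' S : Y -> Prop) : Prop :=
  exists O, opY O /\ forall y, S y <-> (V' y /\ O y).

Definition pseudobase_sub {Y : Type} (opY : (Y -> Prop) -> Prop) (V' : Y -> Prop)
  (P : (Y -> Prop) -> Prop) : Prop :=
  (forall S, P S -> nonempty S /\ subspace_open opY V' S) /\
  (forall T, subspace_open opY V' T -> nonempty T -> exists S, P S /\ subset S T).

(* For V in B and δ > 0 let D(V,δ) be the union of the open sets O of one of two kinds:
   "spread", i.e. there are two points more than δ apart which every image f_x(V), x in O,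
   comes within δ/4 of; or "bounded", i.e. f(O × V) lies in a closed δ-ball.  D(V,δ) is
   open, and it is dense by lower quasicontinuity of x ↦ f_x(V): if an open set G contains
   no spread open subset, lower quasicontinuity at one value f(x0,y0) yields an open
   O1 ⊆ G on which every f_x(V) meets the δ/4-ball around f(x0,y0), and a far value
   f(x,y) would, by lower quasicontinuity again, make a subset of O1 spread; so O1 is
   bounded.  At a point a of the residual set ⋂ D(V, 1/(k+1)) a spread set is impossible
   whenever f_a(V) has diameter at most δ/4, so f stays within δ of a fixed value on
   U × V for a neighbourhood U of a.  Continuity, quasicontinuity or cliquishness of f_a
   at b supplies such small V in B near b, which gives the three conclusions. *)
From Stdlib Require Import Reals Lra Lia Classical ClassicalEpsilon Cantor.
Open Scope R_scope.

Section MetricFacts.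

Context {Z : Type} (d : Z -> Z -> R).
Hypothesis hd : is_metric d.

Lemma dist_self (c : Z) : d c c = 0.
Proof. destruct hd as [_ [h _]]. now apply h. Qed.

Lemma dist_le_via_center (c u w : Z) : d u w <= d c u + d c w.
Proof.
  destruct hd as [_ [_ [hs ht]]].
  rewrite <- (hs u c). apply ht.
Qed.

Lemma ball_open (c : Z) (r : R) : metric_open d (fun w => d c w < r).
Proof.
  intros w hw. exists (r - d c w). split; [lra|].
  intros w' hw'. destruct hd as [_ [_ [_ ht]]]. specialize (ht c w w'). lra.
Qed.

Lemma ball_nbhd (c : Z) (r : R) : 0 < r -> nbhd (metric_open d) c (fun w => d c w < r).
Proof.
  intro hr. exists (fun w => d c w < r).
  split; [apply ball_open|]. split; [rewrite dist_self; lra | now intros w].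
Qed.

Definition diam_le {Y : Type} (g : Y -> Z) (V : Y -> Prop) (r : R) : Prop :=
  forall y1 y2, V y1 -> V y2 -> d (g y1) (g y2) <= r.

Lemma diam_le_of_ball {Y : Type} (g : Y -> Z) (V : Y -> Prop) (c : Z) (r : R) :
  (forall y, V y -> d c (g y) < r / 2) -> diam_le g V r.
Proof.
  intros hball y1 y2 h1 h2.
  pose proof (dist_le_via_center c (g y1) (g y2)).
  pose proof (hball y1 h1). pose proof (hball y2 h2). lra.
Qed.

End MetricFacts.

Lemma inv_INR_S_lt (eps : R) : 0 < eps -> exists k, / INR (S k) < eps.
Proof.
  intro heps. destruct (INR_unbounded (/ eps)) as [k hk]. exists k.
  rewrite S_INR. pose proof (pos_INR k).
  rewrite <- (Rinv_inv eps). apply Rinv_lt_contravar.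
  - apply Rmult_lt_0_compat; [apply Rinv_0_lt_compat|]; lra.
  - lra.
Qed.

Lemma inv_INR_S_pos (k : nat) : 0 < / INR (S k).
Proof. apply Rinv_0_lt_compat, lt_0_INR. lia. Qed.

Section TopologyFacts.

Context {T : Type} (op : (T -> Prop) -> Prop).
Hypothesis hT : is_topology op.

Lemma nbhd_mem (t : T) (N : T -> Prop) : nbhd op t N -> N t.
Proof. intros [U [_ [hU hUN]]]. now apply hUN. Qed.

Lemma open_nbhd (t : T) (U : T -> Prop) : op U -> U t -> nbhd op t U.
Proof. intros hU ht. exists U. repeat split; auto. now intros s. Qed.

Lemma nbhd_inter (t : T) (N1 N2 : T -> Prop) :
  nbhd op t N1 -> nbhd op t N2 -> nbhd op t (fun s => N1 s /\ N2 s).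
Proof.
  intros [U1 [o1 [t1 s1]]] [U2 [o2 [t2 s2]]].
  exists (fun s => U1 s /\ U2 s). split; [now apply hT|].
  split; [auto|]. intros s [h1 h2]. split; auto.
Qed.

Lemma residual_inter_countable {I : Type} (In : I -> Prop) (e : nat -> I)
  (he : forall i, In i -> exists n, e n = i) (G : I -> T -> Prop) :
  (forall i, In i -> op (G i) /\ dense op (G i)) ->
  residual op (fun t => forall i, In i -> G i t).
Proof.
  intro hG.
  (* Indices outside [In] contribute the whole space, which is open and dense. *)
  exists (fun n => if excluded_middle_informative (In (e n)) then G (e n) else fun _ => True).
  split.
  - intro n. destruct (excluded_middle_informative (In (e n))) as [hi|_].
    + now apply hG.
    + split; [apply hT|]. intros U _ [t hU]. now exists t.
  - intros t ht i hi. destruct (he i hi) as [n <-]. specialize (ht n).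
    now destruct (excluded_middle_informative (In (e n))).
Qed.

Lemma pseudobase_open_refine (V' : T -> Prop) (P : (T -> Prop) -> Prop) (O0 : T -> Prop) :
  pseudobase_sub op V' P -> op O0 -> nonempty O0 -> subset O0 V' ->
  exists S, P S /\ subset S O0 /\
    exists Os, op Os /\ nonempty Os /\ forall t, Os t <-> S t.
Proof.
  intros [hmem hcov] hO0 hne hO0V'.
  destruct (hcov O0) as [S [hPS hSO0]]; auto.
  { exists O0. split; auto. intro t. split; [intro; split; auto | tauto]. }
  destruct (hmem S hPS) as [[s hs] [OS [hOS hSeq]]].
  exists S. split; auto. split; auto.
  exists (fun t => OS t /\ O0 t). split; [now apply hT|]. split.
  - exists s. split; [apply hSeq|]; auto.
  - intro t. split.
    + intros [h1 h2]. apply hSeq. auto.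
    + intro hSt. split; [apply hSeq|]; auto.
Qed.

End TopologyFacts.

Section ControlSets.

Context {X Y Z : Type} (opX : (X -> Prop) -> Prop) (d : Z -> Z -> R).
Hypothesis hX : is_topology opX.
Hypothesis hd : is_metric d.
Variables (f : X -> Y -> Z) (V : Y -> Prop) (dl : R).

Definition spread_on (O : X -> Prop) : Prop :=
  exists z1 z2, dl < d z1 z2 /\ forall x, O x ->
    (exists y, V y /\ d z1 (f x y) < dl / 4) /\ (exists y, V y /\ d z2 (f x y) < dl / 4).

Definition bounded_on (O : X -> Prop) : Prop :=
  exists z, forall x y, O x -> V y -> d z (f x y) <= dl.

Definition control_set : X -> Prop :=
  fun x => exists O, (opX O /\ (spread_on O \/ bounded_on O)) /\ O x.

Lemma control_set_open : opX control_set.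
Proof. apply hX. now intros O []. Qed.

Lemma lower_quasicont_ball (G : X -> Prop) (x0 : X) (y0 : Y) (r : R) :
  lower_quasicont opX d (img_section f V) -> opX G -> G x0 -> V y0 -> 0 < r ->
  exists O, opX O /\ nonempty O /\ subset O G /\
    forall x, O x -> exists y, V y /\ d (f x0 y0) (f x y) < r.
Proof.
  intros hlq hG hx0 hy0 hr.
  destruct (hlq x0 G (fun w => d (f x0 y0) w < r)) as [O [hO [hne [hOG hmeet]]]].
  - now apply open_nbhd.
  - now apply ball_open.
  - exists (f x0 y0). split; [now exists y0 | rewrite dist_self; auto].
  - exists O. repeat split; auto. intros x hx.
    destruct (hmeet x hx) as [w [[y [hy <-]] hw]]. now exists y.
Qed.

Lemma control_set_dense :
  0 < dl -> nonempty V -> lower_quasicont opX d (img_section f V) -> dense opX control_set.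
Proof.
  intros hdl [y0 hy0] hlq G hG [x0 hx0].
  destruct (classic (exists O, opX O /\ nonempty O /\ subset O G /\ spread_on O))
    as [[O [hO [[x hx] [hOG hsp]]]] | hnosp].
  { exists x. split; [auto|]. exists O. auto. }
  destruct (lower_quasicont_ball G x0 y0 (dl / 4)) as [O1 [hO1 [[x1 hx1] [hO1G hnear]]]];
    auto; try lra.
  exists x1. split; [auto|]. exists O1. split; [|auto]. split; [auto|]. right.
  exists (f x0 y0). intros x y hx hy. apply Rnot_lt_le. intro hfar.
  destruct (lower_quasicont_ball O1 x y (dl / 4)) as [O [hO [hne [hOO1 hnear']]]];
    auto; try lra.
  apply hnosp. exists O. repeat split; auto.
  - intros u hu; auto.
  - exists (f x0 y0), (f x y). split; [lra|]. intros u hu. split; auto.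
Qed.

Lemma control_set_bounded (a : X) :
  0 < dl -> control_set a -> diam_le d (f a) V (dl / 4) ->
  exists U z, nbhd opX a U /\ forall x y, U x -> V y -> d z (f x y) <= dl.
Proof.
  intros hdl [O [[hO [hsp | [z hz]]] ha]] hdiam.
  - exfalso. destruct hsp as [z1 [z2 [hfar hsp]]].
    destruct (hsp a ha) as [[y1 [h1 n1]] [y2 [h2 n2]]].
    pose proof (hdiam y1 y2 h1 h2).
    destruct hd as [_ [_ [hs ht]]].
    pose proof (ht z1 (f a y1) z2). pose proof (ht (f a y1) (f a y2) z2).
    rewrite (hs (f a y2) z2) in *. lra.
  - exists O, z. split; [now apply open_nbhd | auto].
Qed.

End ControlSets.

Definition oscillation_control {X Y Z : Type} (opX : (X -> Prop) -> Prop) (d : Z -> Z -> R)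
  (f : X -> Y -> Z) (B : (Y -> Prop) -> Prop) (a : X) : Prop :=
  forall eps, 0 < eps -> exists r, 0 < r <= eps /\
    forall V, B V -> diam_le d (f a) V r ->
      exists U z, nbhd opX a U /\ forall x y, U x -> V y -> d z (f x y) <= eps.

Lemma oscillation_control_of_control_sets {X Y Z : Type} (opX : (X -> Prop) -> Prop)
  (d : Z -> Z -> R) (hd : is_metric d) (f : X -> Y -> Z) (B : (Y -> Prop) -> Prop) (a : X) :
  (forall V k, B V -> control_set opX d f V (/ INR (S k)) a) ->
  oscillation_control opX d f B a.
Proof.
  intros ha eps heps.
  destruct (inv_INR_S_lt eps heps) as [k hk]. pose proof (inv_INR_S_pos k).
  exists (/ INR (S k) / 4). split; [lra|].
  intros V hV hdiam.
  destruct (control_set_bounded opX d hd f V (/ INR (S k)) a) as [U [z [hU hz]]];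
    auto.
  exists U, z. split; auto. intros x y hx hy. specialize (hz x y hx hy). lra.
Qed.

Section OscillationControlConsequences.

Variables (X Y Z : Type) (opX : (X -> Prop) -> Prop) (opY : (Y -> Prop) -> Prop).
Variables (d : Z -> Z -> R) (f : X -> Y -> Z) (B : (Y -> Prop) -> Prop) (a : X).
Hypothesis hY : is_topology opY.
Hypothesis hd : is_metric d.
Hypothesis hctl : oscillation_control opX d f B a.

Lemma joint_continuous_of_oscillation_control (b : Y) :
  continuous_at opY d (f a) b ->
  (exists Bb, (forall V, Bb V -> B V) /\ nbhd_base opY b Bb) ->
  joint_continuous_at opX opY d f a b.
Proof.
  intros hc [Bb [hBbB [hbase hrefine]]] W hW hWab.
  destruct (hW _ hWab) as [eps [heps hball]].
  destruct (hctl (eps / 3)) as [r [[hr hre] hsmall]]; [lra|].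
  destruct (hc (fun w => d (f a b) w < r / 2)) as [N [hN hNball]].
  { now apply ball_open. }
  { rewrite dist_self; auto; lra. }
  destruct (hrefine N hN) as [V [hBbV hVN]].
  destruct (hsmall V (hBbB V hBbV)) as [U [z [hU hz]]].
  { apply diam_le_of_ball with (f a b); auto. }
  exists U, V. split; [auto|]. split; [auto|].
  intros x y hx hy. apply hball.
  pose proof (dist_le_via_center d hd z (f a b) (f x y)).
  pose proof (hz a b (nbhd_mem opX a U hU) (nbhd_mem opY b V (hbase V hBbV))).
  pose proof (hz x y hx hy). lra.
Qed.

Lemma quasicont_wrt_x_of_oscillation_control (b : Y) :
  quasicontinuous_at opY d (f a) b ->
  (exists V' P, nbhd opY b V' /\ (forall S, P S -> B S) /\ pseudobase_sub opY V' P) ->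
  quasicont_wrt_x opX opY d f a b.
Proof.
  intros hq [V' [P [hV' [hPB hpb]]]] V eps hV heps.
  destruct (hctl (eps / 3)) as [r [[hr hre] hsmall]]; [lra|].
  destruct (hq (fun y => V y /\ V' y) (fun w => d (f a b) w < r / 2))
    as [O0 [hO0 [hne0 [hO0V hO0ball]]]].
  { now apply nbhd_inter. }
  { apply ball_nbhd; auto; lra. }
  destruct (pseudobase_open_refine opY hY V' P O0) as [S [hPS [hSO0 [Os [hOs [hne hOsS]]]]]];
    auto.
  { intros y hy. apply (hO0V y hy). }
  destruct (hsmall S (hPB S hPS)) as [U [z [hU hz]]].
  { apply diam_le_of_ball with (f a b); auto. }
  exists U, Os. repeat split; auto.
  { intros y hy. apply hO0V, hSO0, hOsS, hy. }
  intros x y hx hy. destruct hne as [y0 hy0]. apply hOsS in hy0, hy.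
  destruct hd as [_ [_ [_ ht]]].
  pose proof (ht (f a b) (f a y0) (f x y)).
  pose proof (dist_le_via_center d hd z (f a y0) (f x y)).
  pose proof (hO0ball y0 (hSO0 y0 hy0)).
  pose proof (hz a y0 (nbhd_mem opX a U hU) hy0). pose proof (hz x y hx hy). lra.
Qed.

Lemma cliquish_wrt_x_of_oscillation_control (b : Y) :
  cliquish_at opY d (f a) b ->
  (exists V' P, nbhd opY b V' /\ (forall S, P S -> B S) /\ pseudobase_sub opY V' P) ->
  cliquish_wrt_x opX opY d f a b.
Proof.
  intros hq [V' [P [hV' [hPB hpb]]]] V eps hV heps.
  destruct (hctl (eps / 3)) as [r [[hr hre] hsmall]]; [lra|].
  destruct (hq r (fun y => V y /\ V' y)) as [O0 [hO0 [hne0 [hO0V hO0diam]]]]; auto.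
  { now apply nbhd_inter. }
  destruct (pseudobase_open_refine opY hY V' P O0) as [S [hPS [hSO0 [Os [hOs [hne hOsS]]]]]];
    auto.
  { intros y hy. apply (hO0V y hy). }
  destruct (hsmall S (hPB S hPS)) as [U [z [hU hz]]].
  { intros y1 y2 h1 h2. auto. }
  exists U, Os. repeat split; auto.
  { intros y hy. apply hO0V, hSO0, hOsS, hy. }
  intros x y y' hx hy hy'. apply hOsS in hy, hy'.
  pose proof (dist_le_via_center d hd z (f a y) (f x y')).
  pose proof (hz a y (nbhd_mem opX a U hU) hy). pose proof (hz x y' hx hy'). lra.
Qed.

End OscillationControlConsequences.

Lemma enum_prod_nat {I : Type} (In : I -> Prop) (e : nat -> I) :
  (forall i, In i -> exists n, e n = i) ->
  forall p : I * nat, In (fst p) ->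
    exists n, (e (fst (Cantor.of_nat n)), snd (Cantor.of_nat n)) = p.
Proof.
  intros he [i k] hi. destruct (he i hi) as [m <-].
  exists (Cantor.to_nat (m, k)). now rewrite Cantor.cancel_of_to.
Qed.

Theorem theorem3p3 (X Y Z : Type)
  (opX : (X -> Prop) -> Prop) (opY : (Y -> Prop) -> Prop) (d : Z -> Z -> R)
  (hX : is_topology opX) (hY : is_topology opY) (hd : is_metric d)
  (f : X -> Y -> Z) (B : (Y -> Prop) -> Prop)
  (hBc : countable_coll B) (hBne : forall V, B V -> nonempty V)
  (hlq : forall V, B V -> lower_quasicont opX d (img_section f V)) :
  exists R0 : X -> Prop, residual opX R0 /\
    forall a, R0 a ->
      (forall b, continuous_at opY d (f a) b ->
         (exists Bb, (forall V, Bb V -> B V) /\ nbhd_base opY b Bb) ->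
         joint_continuous_at opX opY d f a b) /\
      (forall b, quasicontinuous_at opY d (f a) b ->
         (exists V' P, nbhd opY b V' /\ (forall S, P S -> B S) /\ pseudobase_sub opY V' P) ->
         quasicont_wrt_x opX opY d f a b) /\
      (forall b, cliquish_at opY d (f a) b ->
         (exists V' P, nbhd opY b V' /\ (forall S, P S -> B S) /\ pseudobase_sub opY V' P) ->
         cliquish_wrt_x opX opY d f a b).
Proof.
  destruct hBc as [e he].
  exists (fun a => forall p : (Y -> Prop) * nat, B (fst p) ->
                     control_set opX d f (fst p) (/ INR (S (snd p))) a).
  split.
  - apply residual_inter_countable with (e := fun n => (e (fst (Cantor.of_nat n)),
                                                       snd (Cantor.of_nat n))); auto.
    + now apply enum_prod_nat.
    + intros [V k] hV. split.
      * now apply control_set_open.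
      * apply control_set_dense; auto. apply inv_INR_S_pos.
  - intros a ha.
    assert (hctl : oscillation_control opX d f B a).
    { apply oscillation_control_of_control_sets; auto. intros V k hV. exact (ha (V, k) hV). }
    split; [|split]; intro b.
    + now apply joint_continuous_of_oscillation_control.
    + now apply quasicont_wrt_x_of_oscillation_control.
    + now apply cliquish_wrt_x_of_oscillation_control.
Qed.
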